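(* Let $X$ be a continuous random variable with finite support $[a,b]$, and fix a positive integer $m$. For each $n > m$, let $X_1, \dots, X_n$ be i.i.d. samples from $X$ and let $X_{(1)} \le \dots \le X_{(n)}$ denote their order statistics. Then $E[X_{(k+m)} - X_{(k)}] \to 0$ as $n \to \infty$ uniformly for all $1 \le k \le n-m$; that is, for every $\varepsilon > 0$ there exists $N$ such that for all $n > N$ and all $1 \le k \le n-m$, $E[X_{(k+m)} - X_{(k)}] \le \varepsilon$. *)

From HB Require Import structures.
From mathcomp Require Import all_boot all_order all_algebra.
From mathcomp Require Import all_classical all_reals all_analysis.
Set Implicit Arguments. Unset Strict Implicit. Unset Printing Implicit Defensive.
Import Order.TTheory GRing.Theory Num.Theory.
Local Open Scope classical_set_scope.
Local Open Scope ring_scope.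

(* A law mu on R has no atoms (continuous CDF): "X is a continuous r.v." *)
Definition atomless (R : realType) (mu : probability R R) : Prop :=
  forall x : R, mu [set x] = 0%E.

Definition support_is (R : realType) (mu : probability R R) (a b : R) : Prop :=
  mu [set` `[a, b]] = 1%E /\
  forall x : R, a <= x <= b -> forall e : R, 0 < e -> (0 < mu [set y : R | (x - e < y < x + e)%R])%E.

Definition has_law (R : realType) d (T : measurableType d)
  (P : probability T R) (X : T -> R) (mu : probability R R) : Prop :=
  measurable_fun setT X /\
  forall A : set R, measurable A -> P (X @^-1` A) = mu A.

Definition mutually_independent (R : realType) d (T : measurableType d)
  (P : probability T R) (n : nat) (X : 'I_n -> T -> R) : Prop :=
  forall A : 'I_n -> set R, (forall i, measurable (A i)) ->
    P (\bigcap_(i in [set: 'I_n]) (X i @^-1` A i)) =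
    (\prod_(i < n) P (X i @^-1` A i))%E.

Definition iid_law (R : realType) d (T : measurableType d)
  (P : probability T R) (n : nat) (X : 'I_n -> T -> R) (mu : probability R R)
  : Prop :=
  (forall i, has_law P (X i) mu) /\ mutually_independent P X.

(* k-th order statistic X_(k), 1-based: the k-th smallest of X_1(w),...,X_n(w) *)
Definition order_stat (R : realType) (T : Type) (n : nat)
  (X : 'I_n -> T -> R) (k : nat) (w : T) : R :=
  nth 0 (sort (<=%R) [seq X i w | i <- enum 'I_n]) k.-1.

From HB Require Import structures.
From mathcomp Require Import all_boot all_order all_algebra.
From mathcomp Require Import all_classical all_reals all_analysis.
From mathcomp Require Import measurable_realfun lra zify.
Set Implicit Arguments. Unset Strict Implicit. Unset Printing Implicit Defensive.
Import Order.TTheory GRing.Theory Num.Theory.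
Local Open Scope classical_set_scope.
Local Open Scope ring_scope.

(* Cut [a, b] into the L = floor((b - a) / δ) cells of width δ that fit in it,
   and the n samples into m blocks of s = n %/ m consecutive indices.  Every
   cell has positive mass, so a given block misses a given cell with
   probability (1 - mu cell)^s, which tends to 0 as n grows: outside an event
   of small probability every block meets every cell.  On that event
   X_(k+m) - X_(k) <= 2δ, since otherwise the cell after the one containing
   X_(k) lies strictly between X_(k) and X_(k+m) and holds a sample from each
   of the m blocks, whereas at most m - 1 samples lie strictly between these
   order statistics.  Elsewhere the gap is at most b - a. *)

Definition in_block (s bb i : nat) : bool := (bb * s <= i < bb.+1 * s)%N.

Definition cell {R : realType} (a δ : R) (j : nat) : set R :=
  [set` `[a + j%:R * δ, a + j.+1%:R * δ]].

Lemma count_iota_le_itv (P : pred nat) a b n :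
  (forall p, (p < n)%N -> P p -> (a <= p < b)%N) ->
  (count P (iota 0 n) <= b - a)%N.
Proof.
move=> Pab; rewrite -size_filter -(size_iota a (b - a)).
apply: uniq_leq_size; first by rewrite filter_uniq // iota_uniq.
move=> p; rewrite mem_filter mem_iota => /andP[Pp /= pn].
by have /andP[ap pb] := Pab p pn Pp; rewrite mem_iota ap /=; lia.
Qed.

Lemma count_ge_blocks (U : Type) n (v : 'I_n -> U) (Q : pred U) m s :
  (forall bb, (bb < m)%N -> exists2 i : 'I_n, in_block s bb i & Q (v i)) ->
  (m <= count Q [seq v i | i <- enum 'I_n])%N.
Proof.
move=> blockQ.
have /boolp.choice[f fP] (bb : 'I_m) : exists i : 'I_n, in_block s bb i && Q (v i).
  by have [i ? ?] := blockQ bb (ltn_ord bb); exists i; apply/andP.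
have f_inj : injective f.
  move=> b1 b2 eqf; apply/val_inj.
  move: (fP b1) (fP b2); rewrite /in_block eqf.
  move=> /andP[/andP[lo1 hi1] _] /andP[/andP[lo2 hi2] _].
  apply/eqP; rewrite eqn_leq; apply/andP; split; rewrite leqNgt; apply/negP.
    by move=> lt; have := leq_trans (leq_mul lt (leqnn s)) lo1; rewrite leqNgt hi2.
  by move=> lt; have := leq_trans (leq_mul lt (leqnn s)) lo2; rewrite leqNgt hi1.
rewrite count_map -size_filter -(size_enum_ord m) -(size_map f).
apply: uniq_leq_size; first by rewrite map_inj_uniq ?enum_uniq.
move=> _ /mapP[bb _ ->]; rewrite mem_filter mem_enum andbT.
by have /andP[] := fP bb.
Qed.

Lemma prod_in_block (R : comPzSemiRingType) n s bb (q : R) : (bb.+1 * s <= n)%N ->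
  \prod_(i < n) (if in_block s bb i then q else 1) = q ^+ s.
Proof.
move=> block_n.
rewrite -(big_mkord xpredT (fun i => if in_block s bb i then q else 1)).
rewrite (@big_cat_nat _ _ _ (bb * s)) //=; last by rewrite mulSn in block_n; lia.
rewrite [X in _ * X](@big_cat_nat _ _ _ (bb.+1 * s)) //=; last by rewrite mulSn; lia.
rewrite [X in X * _](eq_big_nat _ _ (F2 := fun=> 1)); last first.
  by move=> i /andP[_ ib]; rewrite /in_block leqNgt ib.
rewrite [X in _ * (X * _)](eq_big_nat _ _ (F2 := fun=> q)); last first.
  by move=> i; rewrite /in_block => ->.
rewrite [X in _ * (_ * X)](eq_big_nat _ _ (F2 := fun=> 1)); last first.
  by move=> i /andP[bi _]; rewrite /in_block ltnNge bi andbF.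
by rewrite !prodr_const_nat !expr1n mul1r mulr1 mulSn addnK.
Qed.

Section order_statistics.
Variables (R : realType) (T : Type) (n : nat) (X : 'I_n -> T -> R) (w : T).

Local Notation sample := [seq X i w | i <- enum 'I_n].

Let sorted_sample_mono i j : (i <= j < n)%N ->
  nth 0 (sort <=%R sample) i <= nth 0 (sort <=%R sample) j.
Proof.
have sz : size (sort <=%R sample) = n by rewrite size_sort size_map size_enum_ord.
move=> /andP[ij jn]; apply: (sorted_leq_nth le_trans le_refl) => //.
- by apply: sort_sorted; exact: le_total.
- by rewrite inE sz; lia.
- by rewrite inE sz.
Qed.

Lemma order_stat_mem k : (0 < k <= n)%N -> exists i, order_stat X k w = X i w.
Proof.
move=> /andP[k0 kn].
have : order_stat X k w \in sample.
  by rewrite -(mem_sort <=%R) mem_nth // size_sort size_map size_enum_ord; lia.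
by move=> /mapP[i _ ->]; exists i.
Qed.

Lemma order_stat_le k l :
  (0 < k)%N -> (k <= l <= n)%N -> order_stat X k w <= order_stat X l w.
Proof. by move=> k0 /andP[kl ln]; apply: sorted_sample_mono; lia. Qed.

Lemma count_between_order_stat k m : (0 < k)%N -> (k + m <= n)%N ->
  (count [pred x | (order_stat X k w < x < order_stat X (k + m) w)%R] sample
    <= m.-1)%N.
Proof.
move=> k0 kmn.
rewrite -(count_sort <=%R) -[sort _ _](mkseq_nth 0) count_map size_sort.
rewrite size_map size_enum_ord.
have -> : m.-1 = ((k + m).-1 - k)%N by lia.
apply: count_iota_le_itv => p pn /andP[lo_p p_hi]; apply/andP; split.
  rewrite leqNgt; apply/negP => pk; move: lo_p; rewrite ltNge.
  by rewrite sorted_sample_mono //; lia.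
rewrite ltnNge; apply/negP => kmp; move: p_hi; rewrite ltNge.
by rewrite sorted_sample_mono //; lia.
Qed.

Lemma order_stat_gap_le k m s a b δ :
  (0 < k)%N -> (k + m <= n)%N -> (0 < m)%N -> 0 < δ ->
  (forall i, a <= X i w <= b) ->
  (forall j bb, a + j.+1%:R * δ <= b -> (bb < m)%N ->
     exists2 i : 'I_n, in_block s bb i & cell a δ j (X i w)) ->
  order_stat X (k + m) w - order_stat X k w <= δ *+ 2.
Proof.
move=> k0 kmn m0 δ0 Xab blocks_meet.
set lo := order_stat X k w; set hi := order_stat X (k + m) w.
rewrite leNgt; apply/negP => gap; rewrite mulr2n in gap.
have [il lo_il] : exists i, lo = X i w by apply: order_stat_mem; lia.
have [ih hi_ih] : exists i, hi = X i w by apply: order_stat_mem; lia.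
have a_lo : a <= lo by rewrite lo_il; case/andP: (Xab il).
have hi_b : hi <= b by rewrite hi_ih; case/andP: (Xab ih).
pose t := Num.truncn ((lo - a) / δ).
have /andP[t_le t_gt] : t%:R <= (lo - a) / δ < t.+1%:R.
  by apply: truncn_itv; rewrite divr_ge0 // ?subr_ge0 // ltW.
rewrite ler_pdivlMr // in t_le; rewrite ltr_pdivrMr // in t_gt.
have natS j : j.+1%:R = j%:R + 1 :> R by rewrite -addn1 natrD.
rewrite natS in t_gt.
have next_cell_inside : a + t.+2%:R * δ <= b by rewrite !natS; lra.
have := count_between_order_stat k0 kmn.
rewrite -/lo -/hi leqNgt => /negP; apply; rewrite prednK //.
apply: (count_ge_blocks (s := s)) => bb bbm.
have [i i_bb] := blocks_meet t.+1 bb next_cell_inside bbm.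
rewrite /cell /= in_itv /= !natS => /andP[cell_lo cell_hi].
by exists i => //=; apply/andP; split; lra.
Qed.

End order_statistics.

Section measure_lemmas.
Local Open Scope ereal_scope.
Context d (T : measurableType d) (R : realType).

(* Order statistics are not shown to be measurable, so monotonicity is taken
   from the definition of the integral as a supremum over simple minorants. *)
Lemma ge0_le_integral_nonmeasurable (mu : {measure set T -> \bar R})
    (f g : T -> \bar R) :
  (forall x, 0 <= f x) -> (forall x, f x <= g x) ->
  \int[mu]_x f x <= \int[mu]_x g x.
Proof.
move=> f0 fg; have g0 x : 0 <= g x by exact: le_trans (fg x).
rewrite /integral !patch_setT.
have fneg0 (h : T -> \bar R) : (forall x, 0 <= h x) -> h^\- = cst 0.
  by move=> h0; apply/funext => x; rewrite (@ge0_funenegE _ _ setT) ?in_setT.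
have fpos (h : T -> \bar R) : (forall x, 0 <= h x) -> h^\+ = h.
  by move=> h0; apply/funext => x; rewrite (@ge0_funeposE _ _ setT) ?in_setT.
rewrite (fneg0 f) // (fneg0 g) // (fpos f) // (fpos g) //.
apply: leeB => //; apply: ereal_sup_le => _ [h hf <-]; exists h => //= x.
exact: le_trans (hf x) (fg x).
Qed.

Lemma ge0_le_integral_off_null (mu : {measure set T -> \bar R}) (N : set T)
    (f g : T -> \bar R) :
  measurable N -> mu N = 0 -> measurable_fun setT g ->
  (forall x, 0 <= f x) -> (forall x, 0 <= g x) ->
  (forall x, ~ N x -> f x <= g x) ->
  \int[mu]_x f x <= \int[mu]_x g x.
Proof.
move=> mN muN0 mg f0 g0 fg.
(* f <= g + (+oo on N) everywhere, and the added term integrates to +oo * 0. *)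
have int_N : \int[mu]_x ((cst +oo) \_ N) x = 0.
  by rewrite -integral_mkcond integral_cst // muN0 mule0.
rewrite -[leRHS]adde0 -int_N -ge0_integralD //.
- apply: ge0_le_integral_nonmeasurable => // x; rewrite patchE.
  case: ifPn => [_ | /negP xN]; last by rewrite adde0; apply: fg => /mem_set.
  by rewrite addey ?leey // gt_eqF // (lt_le_trans ltNy0 (g0 x)).
- by move=> x _; rewrite patchE; case: ifP => _ //=; exact: leey.
- exact/(measurable_restrictT _ _).1.
Qed.

Lemma integral_le_off_event (P : probability T R) (B N : set T) (f : T -> R)
    (c r : R) :
  measurable B -> measurable N -> P N = 0 -> (0 <= c)%R -> (0 <= r)%R ->
  (forall x, 0 <= f x)%R ->
  (forall x, ~ N x -> f x <= c + r)%R ->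
  (forall x, ~ N x -> ~ B x -> f x <= c)%R ->
  \int[P]_x (f x)%:E <= c%:E + r%:E * P B.
Proof.
move=> mB mN PN0 c0 r0 f0 f_bad f_good.
have mB1 : measurable_fun setT (EFin \o (\1_B : T -> R)).
  by apply/measurable_EFinP; exact: measurable_indic.
pose g x := c%:E + r%:E * (\1_B x)%:E.
apply: (@le_trans _ _ (\int[P]_x g x)).
  apply: (ge0_le_integral_off_null (g := g) mN PN0) => [|x|x|x Nx].
  - by apply: emeasurable_funD => //; exact: emeasurable_funM.
  - by rewrite lee_fin.
  - by rewrite adde_ge0 ?mule_ge0 ?lee_fin.
  - rewrite /g indicE; have [Bx|Bx] := boolp.pselect (B x).
      by rewrite mem_set //= mule1 -EFinD lee_fin f_bad.
    by rewrite memNset //= mule0 adde0 lee_fin f_good.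
rewrite ge0_integralD //; last 2 first.
- by move=> x _; rewrite mule_ge0 ?lee_fin.
- exact: emeasurable_funM.
(* [P] is applied through its measure coercion here: refold it so that
   [probability_setT] matches. *)
rewrite integral_cst // -[X in c%:E * X]/(P setT) probability_setT mule1.
by rewrite ge0_integralZl_EFin // integral_indic // setIT.
Qed.

Lemma measure_fin_bigcup_le (mu : {measure set T -> \bar R}) (A : nat -> set T)
    n (e : R) :
  (forall i, (i < n)%N -> measurable (A i) /\ mu (A i) <= e%:E) ->
  mu (\bigcup_(i in `I_n) A i) <= (n%:R * e)%:E.
Proof.
move=> Ae; rewrite bigcup_mkord (le_trans (Boole_inequality mu _)) //.
  by move=> i /Ae[].
rewrite (le_trans (lee_sum _ (fun (i : 'I_n) _ => (Ae i (ltn_ord i)).2))) //.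
by rewrite sumEFin sumr_const card_ord mulr_natl.
Qed.

End measure_lemmas.

Lemma prob_itv1_le (R : realType) (mu : probability R R) (a b : R) :
  mu [set` `[a, b]] = 1%E -> a <= b.
Proof.
move=> ab1; rewrite leNgt; apply/negP => ba; move: ab1.
rewrite set_itv_ge ?measure0; last by rewrite bnd_simp -ltNge.
by move=> /(congr1 fine) /eqP; rewrite eq_sym oner_eq0.
Qed.

Lemma support_itv_gt0 (R : realType) (mu : probability R R) (a b c e : R) :
  support_is mu a b -> a <= c -> c < e -> e <= b -> (0 < mu [set` `[c, e]])%E.
Proof.
move=> [_ supp] ac ce eb.
have mid : a <= (c + e) / 2 <= b by apply/andP; split; lra.
apply: lt_le_trans (supp _ mid ((e - c) / 2) _) _.
  by rewrite divr_gt0 ?subr_gt0.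
apply: le_measure; rewrite ?inE; [|exact: measurable_itv|].
- have -> : [set y | (c + e) / 2 - (e - c) / 2 < y < (c + e) / 2 + (e - c) / 2] =
      [set` `](c + e) / 2 - (e - c) / 2, (c + e) / 2 + (e - c) / 2[] :> set R.
    by apply/seteqP; split => y; rewrite /= in_itv.
  exact: measurable_itv.
- by move=> y /= /andP[y1 y2]; rewrite in_itv /=; apply/andP; split; lra.
Qed.

Lemma prob_gt0_complement_lt1 d (T : measurableType d) (R : realType)
    (P : probability T R) (A : set T) :
  measurable A -> (0 < P A)%E -> 0 <= 1 - fine (P A) < 1.
Proof.
move=> mA PA0; have PA1 := probability_le1 P mA.
rewrite -(fineK (fin_num_measure P _ mA)) lte_fin lee_fin in PA0 PA1.
by apply/andP; split; lra.
Qed.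

Lemma cell_le_truncn (R : realType) (a b δ : R) j : 0 < δ -> a <= b ->
  (a + j.+1%:R * δ <= b) = (j < Num.truncn ((b - a) / δ))%N.
Proof.
move=> δ0 ab; rewrite truncn_ge_nat; last by rewrite divr_ge0 ?subr_ge0 // ltW.
rewrite ler_pdivlMr //.
by apply/idP/idP => h; lra.
Qed.

Lemma uniform_expr_le (R : realType) (q : nat -> R) L (η : R) :
  (forall j, (j < L)%N -> 0 <= q j < 1) -> 0 < η ->
  exists N, forall s, (N <= s)%N -> forall j, (j < L)%N -> q j ^+ s <= η.
Proof.
move=> + η0; elim: L => [|L IH] q01; first by exists 0%N.
have [N1 HN1] := IH (fun j jL => q01 j (leqW jL)).
have /andP[qL0 qL1] := q01 L (ltnSn L).
have qL_lt1 : `|q L| < 1 by rewrite ger0_norm.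
have /cvgrPdist_le/(_ η η0)[N2 _ HN2] := cvg_expr qL_lt1.
exists (maxn N1 N2) => s; rewrite geq_max => /andP[N1s N2s] j.
rewrite ltnS leq_eqVlt => /orP[/eqP -> | jL]; last exact: HN1.
by have := HN2 s N2s; rewrite /= sub0r normrN ger0_norm // exprn_ge0.
Qed.

Section iid_samples.
Context d (T : measurableType d) (R : realType) (P : probability T R) (n : nat)
  (X : 'I_n -> T -> R) (mu : probability R R).
Hypothesis iidX : iid_law P X mu.

Definition block_avoids (s bb : nat) (C : set R) : set T :=
  \bigcap_(i in [set: 'I_n]) X i @^-1` (if in_block s bb i then ~` C else setT).

Lemma measurable_bigcap_preimage (A : 'I_n -> set R) :
  (forall i, measurable (A i)) ->
  measurable (\bigcap_(i in [set: 'I_n]) X i @^-1` A i).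
Proof.
move=> mA; apply: fin_bigcap_measurable => [|i _]; first exact: finite_finset.
by rewrite -(setTI (_ @^-1` _)); exact: (iidX.1 i).1.
Qed.

Let measurable_block_pattern s bb (C : set R) i : measurable C ->
  measurable (if in_block s bb i then ~` C else setT).
Proof. by move=> mC; case: ifP => _; [exact: measurableC | exact: measurableT]. Qed.

Lemma measurable_block_avoids s bb (C : set R) :
  measurable C -> measurable (block_avoids s bb C).
Proof.
move=> mC; apply: measurable_bigcap_preimage => i.
exact: measurable_block_pattern.
Qed.

Lemma prob_block_avoids s bb (C : set R) : measurable C -> (bb.+1 * s <= n)%N ->
  P (block_avoids s bb C) = ((1 - fine (mu C)) ^+ s)%:E.
Proof.
move=> mC block_n; have [lawX indepX] := iidX.
have mCi i : measurable (if in_block s bb i then ~` C else setT).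
  exact: measurable_block_pattern.
rewrite /block_avoids indepX // -(prod_in_block _ block_n) -prodEFin.
apply: eq_bigr => i _; rewrite (lawX i).2 //.
case: ifP => _; last by rewrite probability_setT.
by rewrite probability_setC // EFinB fineK // fin_num_measure.
Qed.

Lemma prob_all_in (B : set R) : measurable B -> mu B = 1%E ->
  P (\bigcap_(i in [set: 'I_n]) X i @^-1` B) = 1%E.
Proof.
move=> mB muB1; have [lawX indepX] := iidX.
by rewrite (indepX (fun=> B)) // big1 // => i _; rewrite (lawX i).2.
Qed.

Lemma expected_order_stat_gap_le a b δ η L m s k :
  mu [set` `[a, b]] = 1%E -> 0 < δ -> (0 < m)%N -> (m * s <= n)%N ->
  (0 < k)%N -> (k + m <= n)%N ->
  (forall j, a + j.+1%:R * δ <= b -> (j < L)%N) ->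
  (forall j, (j < L)%N -> (1 - fine (mu (cell a δ j))) ^+ s <= η) ->
  (\int[P]_w ((order_stat X (k + m) w - order_stat X k w)%:E)
    <= (δ *+ 2 + (b - a) * ((L * m)%:R * η))%:E)%E.
Proof.
move=> ab1 δ0 m0 msn k0 kmn cells_L cell_missed.
have ab := prob_itv1_le ab1.
pose Bad := \bigcup_(j in `I_L) \bigcup_(bb in `I_m)
  block_avoids s bb (cell a δ j).
pose Out := ~` \bigcap_(i in [set: 'I_n]) X i @^-1` [set` `[a, b]].
have mblock j bb : measurable (block_avoids s bb (cell a δ j)).
  by apply: measurable_block_avoids; exact: measurable_itv.
have mBad : measurable Bad.
  by apply: bigcup_measurable => j _; apply: bigcup_measurable => bb _.
have mIn : measurable (\bigcap_(i in [set: 'I_n]) X i @^-1` [set` `[a, b]]).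
  by apply: measurable_bigcap_preimage => i; exact: measurable_itv.
have mOut : measurable Out by exact: measurableC.
have PBad : (P Bad <= ((L * m)%:R * η)%:E)%E.
  rewrite natrM -mulrA.
  apply: (measure_fin_bigcup_le (A := fun j =>
    \bigcup_(bb in `I_m) block_avoids s bb (cell a δ j))) => j jL.
  split; first by apply: bigcup_measurable => bb _.
  apply: (measure_fin_bigcup_le (A := fun bb => block_avoids s bb (cell a δ j))).
  move=> bb bbm; split => //.
  rewrite -[leLHS]/(P _) prob_block_avoids ?lee_fin ?cell_missed //.
  - exact: measurable_itv.
  - by apply: leq_trans msn; rewrite leq_mul2r bbm orbT.
have POut : P Out = 0%E.
  by rewrite probability_setC // prob_all_in ?subee //; exact: measurable_itv.
have in_ab w : ~ Out w -> forall i, a <= X i w <= b.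
  by move=> /boolp.contrapT inw i; have := inw i I; rewrite /= in_itv.
have blocks_meet w : ~ Bad w -> forall j bb, a + j.+1%:R * δ <= b -> (bb < m)%N ->
    exists2 i : 'I_n, in_block s bb i & cell a δ j (X i w).
  move=> nBad j bb jb bbm; apply: boolp.contrapT => none; apply: nBad.
  exists j; first exact: cells_L.
  exists bb => // i _ /=.
  by case: ifP => // iblock cellX; apply: none; exists i.
apply: le_trans (integral_le_off_event (c := δ *+ 2) (r := b - a) mBad mOut POut
  _ _ _ _ _) _.
- by rewrite mulrn_wge0 // ltW.
- by rewrite subr_ge0.
- by move=> w; rewrite subr_ge0 order_stat_le // leq_addr.
- move=> w /in_ab Xab.
  have [il ->] : exists i, order_stat X k w = X i w by apply: order_stat_mem; lia.
  have [ih ->] : exists i, order_stat X (k + m) w = X i w.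
    by apply: order_stat_mem; lia.
  by have := Xab il; have := Xab ih; rewrite mulr2n; lra.
- move=> w /in_ab Xab /blocks_meet; exact: order_stat_gap_le.
by rewrite [leRHS]EFinD EFinM leeD2l // lee_pmul // lee_fin subr_ge0.
Qed.

End iid_samples.

Theorem corollary1 (R : realType) (mu : probability R R) (a b : R)
  (m : nat) :
  atomless mu -> support_is mu a b -> (0 < m)%N ->
  forall eps : R, 0 < eps ->
  exists N : nat, forall n : nat, (N < n)%N -> (m < n)%N ->
    forall (d : measure_display) (T : measurableType d) (P : probability T R)
           (X : 'I_n -> T -> R),
      iid_law P X mu ->
      forall k : nat, (1 <= k)%N -> (k <= n - m)%N ->
        (\int[P]_w ((order_stat X (k + m) w - order_stat X k w)%:E)
           <= eps%:E)%E.
Proof.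
move=> _ supp m0 eps eps0.
have ab := prob_itv1_le supp.1.
pose δ := eps / 4; have δ0 : 0 < δ by rewrite divr_gt0.
pose L := Num.truncn ((b - a) / δ).
pose K := (b - a) * (L * m)%:R; have K0 : 0 <= K by rewrite mulr_ge0 ?subr_ge0.
pose η := eps / 2 / (K + 1); have η0 : 0 < η by rewrite !divr_gt0 // ltr_wpDl.
have cell_L j : (a + j.+1%:R * δ <= b) = (j < L)%N by exact: cell_le_truncn.
have cell_missed_lt1 j : (j < L)%N -> 0 <= 1 - fine (mu (cell a δ j)) < 1.
  move=> jL; apply: prob_gt0_complement_lt1; first exact: measurable_itv.
  apply: support_itv_gt0 supp _ _ _; rewrite ?cell_L //.
    by rewrite lerDl mulr_ge0 // ltW.
  by rewrite ltrD2l ltr_pM2r // ltr_nat.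
have [N HN] := uniform_expr_le cell_missed_lt1 η0.
exists (m * N)%N => n mNn mn d T P X iidX k k0 kn.
apply: le_trans (expected_order_stat_gap_le (L := L) (η := η) (s := n %/ m)
  iidX supp.1 δ0 m0 _ k0 _ _ (fun j jL => HN _ _ j jL)) _.
- by rewrite mulnC leq_divM.
- lia.
- by move=> j; rewrite cell_L.
- by rewrite leq_divRL //; lia.
have Kη : (K + 1) * η = eps / 2 by rewrite /η mulrC divfK // gt_eqF // ltr_wpDl.
by rewrite lee_fin mulrA -/K /δ mulr2n; lra.
Qed.
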